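(* For every $\phi\in\mathcal{L}$ and every segment $\mathfrak{s}$ of the canonical model $\mathfrak{M}^{C}$: (1) $\mathfrak{M}^{C},\mathfrak{s}\Vdash^+\phi$ iff $\phi\in\mathbf{h}(\mathfrak{s})$; (2) $\mathfrak{M}^{C},\mathfrak{s}\Vdash^-\phi$ iff ${\sim}\phi\in\mathbf{h}(\mathfrak{s})$.
   Context: Fix a countable set $\mathsf{Prop}$ of propositional variables. The language $\mathcal{L}$ is given by the grammar $\phi::=p\mid{\sim}\phi\mid(\phi\wedge\phi)\mid(\phi\vee\phi)\mid(\phi\to\phi)\mid\Box\phi\mid\Diamond\phi$ with $p\in\mathsf{Prop}$. $\phi\leftrightarrow\chi$ abbreviates $(\phi\to\chi)\wedge(\chi\to\phi)$. Semantics. A structure $\langle W,\le,R^+_\Box,R^-_\Box,R^+_\Diamond,R^-_\Diamond,v^+,v^-\rangle$ with $W\ne\varnothing$, $\le$ a preorder, four arbitrary binary relations, and $v^+,v^-:\mathsf{Prop}\to2^W$ upward closed under $\le$ is a $\mathsf{CN4K}$ model; $R(w)=\{w'\mid wRw'\}$. Support: $w\Vdash^\pm p$ iff $w\in v^\pm(p)$; $w\Vdash^+{\sim}\phi$ iff $w\Vdash^-\phi$; $w\Vdash^-{\sim}\phi$ iff $w\Vdash^+\phi$; $w\Vdash^+\phi\wedge\chi$ iff both; $w\Vdash^-\phi\wedge\chi$ iff $w\Vdash^-\phi$ or $w\Vdash^-\chi$; $w\Vdash^+\phi\vee\chi$ iff $w\Vdash^+\phi$ or $w\Vdash^+\chi$;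 $w\Vdash^-\phi\vee\chi$ iff both negatively supported; $w\Vdash^+\phi\to\chi$ iff for all $w'\ge w$, $w'\Vdash^+\phi$ implies $w'\Vdash^+\chi$; $w\Vdash^-\phi\to\chi$ iff $w\Vdash^+\phi$ and $w\Vdash^-\chi$; $w\Vdash^+\Box\phi$ iff $\forall w'\ge w\ \forall w''\in R^+_\Box(w')$: $w''\Vdash^+\phi$; $w\Vdash^-\Box\phi$ iff $\forall w'\ge w\ \exists w''\in R^-_\Box(w')$: $w''\Vdash^-\phi$; $w\Vdash^+\Diamond\phi$ iff $\forall w'\ge w\ \exists w''\in R^+_\Diamond(w')$: $w''\Vdash^+\phi$; $w\Vdash^-\Diamond\phi$ iff $\forall w'\ge w\ \forall w''\in R^-_\Diamond(w')$: $w''\Vdash^-\phi$. Calculus. $\mathcal{H}\mathsf{N4}$ has as axioms all $\mathcal{L}$-instances of: $\phi\to(\chi\to\phi)$; $(\phi\to(\chi\to\psi))\to((\phi\to\chi)\to(\phi\to\psi))$; $\phi\wedge\chi\to\phi$; $\phi\wedge\chi\to\chi$; $\phi\to(\chi\to\phi\wedge\chi)$; $\phi\to\phi\vee\chi$; $\chi\to\phi\vee\chi$; $(\phi\to\psi)\to((\chi\to\psi)\to(\phi\vee\chi\to\psi))$; ${\sim}{\sim}\phi\leftrightarrow\phi$; ${\sim}(\phi\wedge\chi)\leftrightarrow({\sim}\phi\vee{\sim}\chi)$; ${\sim}(\phi\vee\chi)\leftrightarrow({\sim}\phi\wedge{\sim}\chi)$; ${\sim}(\phi\to\chi)\leftrightarrow(\phi\wedge{\sim}\chi)$;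 and modus ponens. $\mathcal{H}\mathsf{CN4K}$ adds the axiom schemes $\Box(\phi\to\phi)$; ${\sim}\Diamond{\sim}(\phi\to\phi)$; $(\Box\phi\wedge\Box\chi)\to\Box(\phi\wedge\chi)$; $({\sim}\Diamond\phi\wedge{\sim}\Diamond\chi)\to{\sim}\Diamond(\phi\vee\chi)$, and the rules: from $\vdash\phi\to\chi$ infer $\vdash\Box\phi\to\Box\chi$; from $\vdash\phi\to\chi$ infer $\vdash\Diamond\phi\to\Diamond\chi$; from $\vdash{\sim}\phi\to{\sim}\chi$ infer $\vdash{\sim}\Box\phi\to{\sim}\Box\chi$; from $\vdash{\sim}\phi\to{\sim}\chi$ infer $\vdash{\sim}\Diamond\phi\to{\sim}\Diamond\chi$. $\Gamma\vdash_{\mathcal{H}\mathsf{CN4K}}\phi$ means there is a finite sequence ending in $\phi$ of axiom instances, members of $\Gamma$, and rule consequences of earlier members, the modal rules being applied only to theorems. A set $\Xi\subseteq\mathcal{L}$ is saturated if it is deductively closed under $\vdash_{\mathcal{H}\mathsf{CN4K}}$ and prime ($\xi\vee\xi'\in\Xi$ implies $\xi\in\Xi$ or $\xi'\in\Xi$). A segment is a tuple $\mathfrak{s}=\langle\Xi,\Phi^+_\Box,\Phi^-_\Box,\Phi^+_\Diamond,\Phi^-_\Diamond\rangle$ where $\Xi$ is a saturated set (the head, $\mathbf{h}(\mathfrak{s})=\Xi$) and each $\Phi^\bullet_\heartsuit$ is a set (possibly empty) of saturated sets such that: if $\Box\phi\in\Xi$ then $\phi\in\Delta$ for every $\Delta\in\Phi^+_\Box$;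 if ${\sim}\Box\phi\in\Xi$ then ${\sim}\phi\in\Delta$ for some $\Delta\in\Phi^-_\Box$; if $\Diamond\phi\in\Xi$ then $\phi\in\Delta$ for some $\Delta\in\Phi^+_\Diamond$; if ${\sim}\Diamond\phi\in\Xi$ then ${\sim}\phi\in\Delta$ for every $\Delta\in\Phi^-_\Diamond$. The canonical model $\mathfrak{M}^{C}$ has as states all segments, $\mathfrak{s}\le^{C}\mathfrak{s}'$ iff $\mathbf{h}(\mathfrak{s})\subseteq\mathbf{h}(\mathfrak{s}')$, $\mathfrak{s}\,{R^\bullet_\heartsuit}^{C}\,\mathfrak{s}'$ iff $\mathbf{h}(\mathfrak{s}')\in\Phi^\bullet_\heartsuit$ (where $\Phi^\bullet_\heartsuit$ is the corresponding component of $\mathfrak{s}$), for $\bullet\in\{+,-\}$, $\heartsuit\in\{\Box,\Diamond\}$; $\mathfrak{s}\in {v^+}^{C}(p)$ iff $p\in\mathbf{h}(\mathfrak{s})$, and $\mathfrak{s}\in{v^-}^{C}(p)$ iff ${\sim}p\in\mathbf{h}(\mathfrak{s})$. *)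

From Stdlib Require Import Bool.

Inductive form : Type :=
| Var : nat -> form
| Neg : form -> form            (* strong negation ~ *)
| And : form -> form -> form
| Or  : form -> form -> form
| Imp : form -> form -> form
| Box : form -> form
| Dia : form -> form.

Definition Iff (a b : form) : form := And (Imp a b) (Imp b a).

Inductive axiom : form -> Prop :=
| A1 : forall p q, axiom (Imp p (Imp q p))
| A2 : forall p q r, axiom (Imp (Imp p (Imp q r)) (Imp (Imp p q) (Imp p r)))
| A3 : forall p q, axiom (Imp (And p q) p)
| A4 : forall p q, axiom (Imp (And p q) q)
| A5 : forall p q, axiom (Imp p (Imp q (And p q)))
| A6 : forall p q, axiom (Imp p (Or p q))
| A7 : forall p q, axiom (Imp q (Or p q))
| A8 : forall p q r, axiom (Imp (Imp p r) (Imp (Imp q r) (Imp (Or p q) r)))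
| A9 : forall p, axiom (Iff (Neg (Neg p)) p)
| A10 : forall p q, axiom (Iff (Neg (And p q)) (Or (Neg p) (Neg q)))
| A11 : forall p q, axiom (Iff (Neg (Or p q)) (And (Neg p) (Neg q)))
| A12 : forall p q, axiom (Iff (Neg (Imp p q)) (And p (Neg q)))
| K1 : forall p, axiom (Box (Imp p p))
| K2 : forall p, axiom (Neg (Dia (Neg (Imp p p))))
| K3 : forall p q, axiom (Imp (And (Box p) (Box q)) (Box (And p q)))
| K4 : forall p q, axiom (Imp (And (Neg (Dia p)) (Neg (Dia q))) (Neg (Dia (Or p q)))).

Definition emptyset : form -> Prop := fun _ => False.

Inductive prf (Gamma : form -> Prop) : form -> Prop :=
| prf_ax : forall p, axiom p -> prf Gamma p
| prf_hyp : forall p, Gamma p -> prf Gamma p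
| prf_mp : forall p q, prf Gamma (Imp p q) -> prf Gamma p -> prf Gamma q
| prf_box : forall p q, prf emptyset (Imp p q) -> prf Gamma (Imp (Box p) (Box q))
| prf_dia : forall p q, prf emptyset (Imp p q) -> prf Gamma (Imp (Dia p) (Dia q))
| prf_nbox : forall p q, prf emptyset (Imp (Neg p) (Neg q)) ->
    prf Gamma (Imp (Neg (Box p)) (Neg (Box q)))
| prf_ndia : forall p q, prf emptyset (Imp (Neg p) (Neg q)) ->
    prf Gamma (Imp (Neg (Dia p)) (Neg (Dia q))).

Definition saturated (X : form -> Prop) : Prop :=
  (forall p, prf X p -> X p) /\
  (forall p q, X (Or p q) -> X p \/ X q).

Record segment : Type := Segment {
  hd : form -> Prop;
  PhiBoxP : (form -> Prop) -> Prop;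
  PhiBoxN : (form -> Prop) -> Prop;
  PhiDiaP : (form -> Prop) -> Prop;
  PhiDiaN : (form -> Prop) -> Prop;
  hd_sat : saturated hd;
  PhiBoxP_sat : forall D, PhiBoxP D -> saturated D;
  PhiBoxN_sat : forall D, PhiBoxN D -> saturated D;
  PhiDiaP_sat : forall D, PhiDiaP D -> saturated D;
  PhiDiaN_sat : forall D, PhiDiaN D -> saturated D;
  seg_box_pos : forall p, hd (Box p) -> forall D, PhiBoxP D -> D p;
  seg_box_neg : forall p, hd (Neg (Box p)) -> exists D, PhiBoxN D /\ D (Neg p);
  seg_dia_pos : forall p, hd (Dia p) -> exists D, PhiDiaP D /\ D p;
  seg_dia_neg : forall p, hd (Neg (Dia p)) -> forall D, PhiDiaN D -> D (Neg p)
}.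

(* The data of a CN4K structure (support only depends on these data). *)
Record structure : Type := Structure {
  W : Type;
  le : W -> W -> Prop;
  RBoxP : W -> W -> Prop;
  RBoxN : W -> W -> Prop;
  RDiaP : W -> W -> Prop;
  RDiaN : W -> W -> Prop;
  vP : nat -> W -> Prop;
  vN : nat -> W -> Prop
}.

Definition is_CN4K_model (M : structure) : Prop :=
  inhabited (W M) /\
  (forall w, le M w w) /\
  (forall u v w, le M u v -> le M v w -> le M u w) /\
  (forall p u v, le M u v -> vP M p u -> vP M p v) /\
  (forall p u v, le M u v -> vN M p u -> vN M p v).

(* supp M w true phi  : w ||-+ phi ;  supp M w false phi : w ||-- phi *)
Fixpoint supp (M : structure) (w : W M) (b : bool) (phi : form) {struct phi} : Prop :=
  match phi with
  | Var p => if b then vP M p w else vN M p w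
  | Neg a => supp M w (negb b) a
  | And a c => if b then supp M w true a /\ supp M w true c
               else supp M w false a \/ supp M w false c
  | Or a c => if b then supp M w true a \/ supp M w true c
              else supp M w false a /\ supp M w false c
  | Imp a c => if b then (forall w', le M w w' -> supp M w' true a -> supp M w' true c)
               else supp M w true a /\ supp M w false c
  | Box a => if b then (forall w', le M w w' -> forall w'', RBoxP M w' w'' -> supp M w'' true a)
             else (forall w', le M w w' -> exists w'', RBoxN M w' w'' /\ supp M w'' false a)
  | Dia a => if b then (forall w', le M w w' -> exists w'', RDiaP M w' w'' /\ supp M w'' true a)
             else (forall w', le M w w' -> forall w'', RDiaN M w' w'' -> supp M w'' false a)
  end.

Definition canonical : structure :=
  {| W := segment;
     le := fun s s' => forall p, hd s p -> hd s' p;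
     RBoxP := fun s s' => PhiBoxP s (hd s');
     RBoxN := fun s s' => PhiBoxN s (hd s');
     RDiaP := fun s s' => PhiDiaP s (hd s');
     RDiaN := fun s s' => PhiDiaN s (hd s');
     vP := fun p s => hd s (Var p);
     vN := fun p s => hd s (Neg (Var p)) |}.

(* A formula outside the head of a segment is refuted by a segment with the
   same head.  For the universal clauses (positive [Imp] and [Box], negative
   [Dia]) its family contains a saturated set given by Lindenbaum's lemma,
   extending the head plus the antecedent, the [Box]-preimage of the head, or
   the negated [~Dia]-preimage of the head, while avoiding the formula.  For the
   existential clauses (negative [Box], positive [Dia]) its family consists of
   all saturated sets avoiding the formula; the monotonicity rules for [~Box]
   and [Dia] guarantee that this family supplies every witness a segment must
   have. *)
From Stdlib Require Import Classical Lia Cantor.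

Definition extend (G : form -> Prop) (a : form) : form -> Prop :=
  fun y => G y \/ y = a.

Lemma prf_mono (G G' : form -> Prop) p :
  (forall x, G x -> G' x) -> prf G p -> prf G' p.
Proof.
  intros HG H; remember G as Gm eqn:EG; induction H; subst;
    [ apply prf_ax | apply prf_hyp, HG | eapply prf_mp
    | apply prf_box | apply prf_dia | apply prf_nbox | apply prf_ndia ]; eauto.
Qed.

Lemma prf_theorem G p : prf emptyset p -> prf G p.
Proof. apply prf_mono; intros x []. Qed.

(* The modal rules only produce theorems, so [prf G] is the closure of the
   theorems and [G] under modus ponens. *)
Lemma prf_mp_closure_ind (G P : form -> Prop) :
  (forall p, prf emptyset p -> P p) -> (forall p, G p -> P p) ->
  (forall p q, P (Imp p q) -> P p -> P q) ->
  forall p, prf G p -> P p.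
Proof.
  intros Hthm Hhyp Hmp p H; remember G as Gm eqn:EG; induction H; subst.
  - apply Hthm, prf_ax; assumption.
  - apply Hhyp; assumption.
  - eapply Hmp; auto.
  - apply Hthm, prf_box; assumption.
  - apply Hthm, prf_dia; assumption.
  - apply Hthm, prf_nbox; assumption.
  - apply Hthm, prf_ndia; assumption.
Qed.

Lemma prf_imp_refl G a : prf G (Imp a a).
Proof.
  eapply prf_mp; [eapply prf_mp|].
  - apply prf_ax, (A2 a (Imp a a) a).
  - apply prf_ax, A1.
  - apply prf_ax, (A1 a a).
Qed.

Lemma prf_imp_const G a b : prf G b -> prf G (Imp a b).
Proof. intro H; eapply prf_mp; [apply prf_ax, A1 | exact H]. Qed.

Lemma prf_deduction G a b : prf (extend G a) b -> prf G (Imp a b).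
Proof.
  revert b; apply prf_mp_closure_ind.
  - intros p Hp; apply prf_imp_const, prf_theorem, Hp.
  - intros p [Hp| ->]; [apply prf_imp_const, prf_hyp, Hp | apply prf_imp_refl].
  - intros p q Hpq Hp; eapply prf_mp; [eapply prf_mp; [apply prf_ax, A2 | exact Hpq] | exact Hp].
Qed.

Lemma prf_and_l G a b : prf G (And a b) -> prf G a.
Proof. apply prf_mp, prf_ax, A3. Qed.

Lemma prf_and_r G a b : prf G (And a b) -> prf G b.
Proof. apply prf_mp, prf_ax, A4. Qed.

Lemma prf_extend_hyp G a : prf (extend G a) a.
Proof. apply prf_hyp; right; reflexivity. Qed.

Lemma prf_modus_ponens_and a b : prf emptyset (Imp (And (Imp a b) a) b).
Proof.
  apply prf_deduction.
  eapply prf_mp; [eapply prf_and_l | eapply prf_and_r]; apply prf_extend_hyp.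
Qed.

Section Saturated.

Context {X : form -> Prop} (HX : saturated X).

Lemma sat_closed p : prf X p -> X p.
Proof. apply HX. Qed.

Lemma sat_theorem p : prf emptyset p -> X p.
Proof. intro H; apply sat_closed, prf_theorem, H. Qed.

Lemma sat_axiom p : axiom p -> X p.
Proof. intro H; apply sat_closed, prf_ax, H. Qed.

Lemma sat_mp a b : X (Imp a b) -> X a -> X b.
Proof. intros Hab Ha; apply sat_closed; eapply prf_mp; apply prf_hyp; eassumption. Qed.

Lemma sat_axiom_iff a b : axiom (Iff a b) -> X a <-> X b.
Proof.
  intro H; split; apply sat_mp, sat_closed;
    [eapply prf_and_l | eapply prf_and_r]; apply prf_ax, H.
Qed.

Lemma sat_and a b : X (And a b) <-> X a /\ X b.
Proof.
  split.
  - intro H; split; apply sat_closed; [eapply prf_and_l | eapply prf_and_r];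
      apply prf_hyp, H.
  - intros [Ha Hb]; apply sat_mp with b; [apply sat_mp with a|]; auto.
    apply sat_axiom, A5.
Qed.

Lemma sat_or a b : X (Or a b) <-> X a \/ X b.
Proof.
  split; [apply HX|].
  intros [H|H]; eapply sat_mp; eauto; apply sat_axiom; constructor.
Qed.

End Saturated.

Fixpoint code (f : form) : nat :=
  match f with
  | Var n => to_nat (0, n)
  | Neg a => to_nat (1, code a)
  | And a b => to_nat (2, to_nat (code a, code b))
  | Or a b => to_nat (3, to_nat (code a, code b))
  | Imp a b => to_nat (4, to_nat (code a, code b))
  | Box a => to_nat (5, code a)
  | Dia a => to_nat (6, code a)
  end.

Lemma to_nat_inj p q : to_nat p = to_nat q -> p = q.
Proof. intro H; rewrite <- (cancel_of_to p), <- (cancel_of_to q), H; reflexivity. Qed.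

Lemma code_inj f g : code f = code g -> f = g.
Proof.
  revert g; induction f; destruct g; cbn [code]; intro H;
    apply to_nat_inj in H; apply pair_equal_spec in H as [Htag Harg]; try discriminate Htag.
  all: try (f_equal; auto; fail).
  all: apply to_nat_inj in Harg; apply pair_equal_spec in Harg as [Hl Hr]; f_equal; auto.
Qed.

Section Lindenbaum.

Variable G : form -> Prop.
Variable phi : form.

Fixpoint lind_stage (n : nat) : form -> Prop :=
  match n with
  | 0 => G
  | S n => fun x => lind_stage n x \/
                    (code x = n /\ ~ prf (extend (lind_stage n) x) phi)
  end.

Definition lind_limit : form -> Prop := fun x => exists n, lind_stage n x.

Lemma lind_stage_mono n m : n <= m -> forall x, lind_stage n x -> lind_stage m x.
Proof. induction 1; auto; intros x Hx; left; auto. Qed.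

Lemma lind_limit_compact p : prf lind_limit p -> exists n, prf (lind_stage n) p.
Proof.
  revert p; apply prf_mp_closure_ind.
  - intros p Hp; exists 0; apply prf_theorem, Hp.
  - intros p [n Hn]; exists n; apply prf_hyp, Hn.
  - intros p q [n1 H1] [n2 H2]; exists (max n1 n2).
    eapply prf_mp; eapply prf_mono; try eassumption; apply lind_stage_mono; lia.
Qed.

Hypothesis G_consistent : ~ prf G phi.

Lemma lind_stage_consistent n : ~ prf (lind_stage n) phi.
Proof.
  induction n as [|n IHn]; [exact G_consistent|]; simpl.
  destruct (classic (exists x, code x = n /\ ~ prf (extend (lind_stage n) x) phi))
    as [[x [Hx Hc]]|Hno]; intro Hp.
  - apply Hc; eapply prf_mono; [|exact Hp].
    intros y [Hy|[Hy _]]; [left; exact Hy | right; apply code_inj; congruence].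
  - apply IHn; eapply prf_mono; [|exact Hp].
    intros y [Hy|[Hy Hc]]; [exact Hy | exfalso; apply Hno; eauto].
Qed.

Lemma lind_limit_consistent : ~ prf lind_limit phi.
Proof.
  intro H; destruct (lind_limit_compact _ H) as [n Hn].
  exact (lind_stage_consistent n Hn).
Qed.

Lemma lind_limit_maximal x : ~ lind_limit x -> prf lind_limit (Imp x phi).
Proof.
  intro Hx; apply prf_deduction, NNPP; intro Hn.
  apply Hx; exists (S (code x)); right; split; [reflexivity|].
  intro Hp; apply Hn; eapply prf_mono; [|exact Hp].
  intros y [Hy|Hy]; [left; exists (code x); exact Hy | right; exact Hy].
Qed.

Lemma lind_limit_saturated : saturated lind_limit.
Proof.
  split.
  - intros p Hp; apply NNPP; intro Hn; apply lind_limit_consistent.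
    exact (prf_mp _ _ _ (lind_limit_maximal _ Hn) Hp).
  - intros p q Hpq; apply NNPP; intro Hn; apply lind_limit_consistent.
    apply prf_mp with (Or p q); [apply prf_mp with (Imp q phi); [apply prf_mp with (Imp p phi)|]|].
    + apply prf_ax, A8.
    + apply lind_limit_maximal; tauto.
    + apply lind_limit_maximal; tauto.
    + apply prf_hyp, Hpq.
Qed.

End Lindenbaum.

Lemma lindenbaum G a :
  ~ prf G a -> exists D, saturated D /\ (forall x, G x -> D x) /\ ~ D a.
Proof.
  intro H; exists (lind_limit G a); split; [|split].
  - apply lind_limit_saturated, H.
  - intros x Hx; exists 0; exact Hx.
  - intro Ha; apply (lind_limit_consistent G a H), prf_hyp, Ha.
Qed.

Definition neg_dia_set (X : form -> Prop) : form -> Prop :=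
  fun x => exists p, x = Neg p /\ X (Neg (Dia p)).

Section Refutation.

Context {X : form -> Prop} (HX : saturated X).

Lemma sat_box_theorem p : prf emptyset p -> X (Box p).
Proof.
  intro Hp; apply (sat_mp HX) with (Box (Imp p p)); [|apply (sat_axiom HX), K1].
  apply sat_theorem, prf_box, prf_imp_const; assumption.
Qed.

Lemma box_preimage_closed c : prf (fun x => X (Box x)) c -> X (Box c).
Proof.
  revert c; apply prf_mp_closure_ind; [exact sat_box_theorem | tauto|].
  intros p q IHpq IHp.
  apply (sat_mp HX) with (Box (And (Imp p q) p)).
  - apply (sat_theorem HX), prf_box, prf_modus_ponens_and.
  - apply (sat_mp HX) with (And (Box (Imp p q)) (Box p)).
    + apply (sat_axiom HX), K3.
    + apply (sat_and HX); auto.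
Qed.

(* [~Dia] is closed under finite joins (K4), so a derivation from finitely
   many [~p] with [~Dia p] in [X] is covered by one [~Dia] of a disjunction. *)
Lemma neg_dia_set_derivation c :
  prf (neg_dia_set X) c -> exists p, X (Neg (Dia p)) /\ prf emptyset (Imp (Neg p) c).
Proof.
  revert c; apply prf_mp_closure_ind.
  - intros c Hc; exists (Neg (Imp c c)); split.
    + apply (sat_axiom HX), K2.
    + apply prf_imp_const, Hc.
  - intros x [p [-> Hp]]; exists p; split; [exact Hp | apply prf_imp_refl].
  - intros p q [p1 [H1 T1]] [p2 [H2 T2]]; exists (Or p1 p2); split.
    + apply (sat_mp HX) with (And (Neg (Dia p1)) (Neg (Dia p2))).
      * apply (sat_axiom HX), K4.
      * apply (sat_and HX); auto.
    + apply prf_deduction.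
      assert (Hboth : prf (extend emptyset (Neg (Or p1 p2))) (And (Neg p1) (Neg p2))).
      { eapply prf_mp; [eapply prf_and_l, prf_ax, A11 | apply prf_extend_hyp]. }
      eapply prf_mp; eapply prf_mp.
      all: first [ apply prf_theorem; eassumption
                 | eapply prf_and_l; exact Hboth | eapply prf_and_r; exact Hboth ].
Qed.

Lemma imp_counter_witness a b :
  ~ X (Imp a b) -> exists D, saturated D /\ (forall p, X p -> D p) /\ D a /\ ~ D b.
Proof.
  intro Hn.
  assert (Hc : ~ prf (extend X a) b).
  { intro Hp; apply Hn, (sat_closed HX), prf_deduction, Hp. }
  destruct (lindenbaum _ _ Hc) as [D [HD [HXD HbD]]].
  exists D; split; [exact HD | repeat split; auto].
  - intros p Hp; apply HXD; left; exact Hp.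
  - apply HXD; right; reflexivity.
Qed.

Lemma box_counter_witness a :
  ~ X (Box a) -> exists D, saturated D /\ (forall p, X (Box p) -> D p) /\ ~ D a.
Proof.
  intro Hn; apply lindenbaum.
  intro Hp; apply Hn, box_preimage_closed, Hp.
Qed.

Lemma nbox_witness a p :
  ~ X (Neg (Box a)) -> X (Neg (Box p)) ->
  exists D, saturated D /\ D (Neg p) /\ ~ D (Neg a).
Proof.
  intros Hn Hp.
  assert (Hc : ~ prf (extend emptyset (Neg p)) (Neg a)).
  { intro Hq; apply Hn; apply (sat_mp HX) with (Neg (Box p)); [|exact Hp].
    apply (sat_theorem HX), prf_nbox, prf_deduction, Hq. }
  destruct (lindenbaum _ _ Hc) as [D [HD [HpD HaD]]].
  exists D; split; [exact HD | split; [apply HpD; right; reflexivity | exact HaD]].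
Qed.

Lemma dia_witness a p :
  ~ X (Dia a) -> X (Dia p) -> exists D, saturated D /\ D p /\ ~ D a.
Proof.
  intros Hn Hp.
  assert (Hc : ~ prf (extend emptyset p) a).
  { intro Hq; apply Hn; apply (sat_mp HX) with (Dia p); [|exact Hp].
    apply (sat_theorem HX), prf_dia, prf_deduction, Hq. }
  destruct (lindenbaum _ _ Hc) as [D [HD [HpD HaD]]].
  exists D; split; [exact HD | split; [apply HpD; right; reflexivity | exact HaD]].
Qed.

Lemma ndia_counter_witness a :
  ~ X (Neg (Dia a)) ->
  exists D, saturated D /\ (forall p, X (Neg (Dia p)) -> D (Neg p)) /\ ~ D (Neg a).
Proof.
  intro Hn.
  assert (Hc : ~ prf (neg_dia_set X) (Neg a)).
  { intro Hq; destruct (neg_dia_set_derivation _ Hq) as [p [Hp Hpa]].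
    apply Hn; apply (sat_mp HX) with (Neg (Dia p)); [|exact Hp].
    apply (sat_theorem HX), prf_ndia, Hpa. }
  destruct (lindenbaum _ _ Hc) as [D [HD [HXD HaD]]].
  exists D; split; [exact HD | repeat split; auto].
  intros p Hp; apply HXD; exists p; auto.
Qed.

End Refutation.

Definition all_forms : form -> Prop := fun _ => True.

Lemma all_forms_sat : saturated all_forms.
Proof. split; intros; [exact I | left; exact I]. Qed.

(* Universal segment conditions hold vacuously for the empty family, existential
   ones are met by the family consisting of [all_forms] alone. *)
Ltac trivial_segment_component :=
  intros; subst;
  first [ apply all_forms_sat | contradiction
        | exists all_forms; split; [reflexivity | exact I] ].

Definition head_segment {X : form -> Prop} (HX : saturated X) : segment.
Proof.
  refine (Segment X (fun _ => False) (eq all_forms) (eq all_forms) (fun _ => False)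
                  HX _ _ _ _ _ _ _ _); trivial_segment_component.
Defined.

Definition box_refuting_segment {X : form -> Prop} (HX : saturated X) (a : form)
  : segment.
Proof.
  refine (Segment X (fun E => saturated E /\ (forall p, X (Box p) -> E p) /\ ~ E a)
                  (eq all_forms) (eq all_forms) (fun _ => False) HX _ _ _ _ _ _ _ _);
    try trivial_segment_component.
  - intros E HE; apply HE.
  - intros p Hp E HE; apply HE, Hp.
Defined.

Definition nbox_refuting_segment {X : form -> Prop} (HX : saturated X) (a : form)
  (Hn : ~ X (Neg (Box a))) : segment.
Proof.
  refine (Segment X (fun _ => False) (fun E => saturated E /\ ~ E (Neg a))
                  (eq all_forms) (fun _ => False) HX _ _ _ _ _ _ _ _);
    try trivial_segment_component.
  - intros E HE; apply HE.
  - intros p Hp; destruct (nbox_witness HX a p Hn Hp) as [D [HD [HpD HaD]]].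
    exists D; auto.
Defined.

Definition dia_refuting_segment {X : form -> Prop} (HX : saturated X) (a : form)
  (Hn : ~ X (Dia a)) : segment.
Proof.
  refine (Segment X (fun _ => False) (eq all_forms) (fun E => saturated E /\ ~ E a)
                  (fun _ => False) HX _ _ _ _ _ _ _ _);
    try trivial_segment_component.
  - intros E HE; apply HE.
  - intros p Hp; destruct (dia_witness HX a p Hn Hp) as [D [HD [HpD HaD]]].
    exists D; auto.
Defined.

Definition ndia_refuting_segment {X : form -> Prop} (HX : saturated X) (a : form)
  : segment.
Proof.
  refine (Segment X (fun _ => False) (eq all_forms) (eq all_forms)
                  (fun E => saturated E /\ (forall p, X (Neg (Dia p)) -> E (Neg p))
                            /\ ~ E (Neg a)) HX _ _ _ _ _ _ _ _);
    try trivial_segment_component.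
  - intros E HE; apply HE.
  - intros p Hp E HE; apply HE, Hp.
Defined.

Definition truthful (phi : form) : Prop :=
  forall s : segment,
    (supp canonical s true phi <-> hd s phi) /\
    (supp canonical s false phi <-> hd s (Neg phi)).

Lemma truthful_var n : truthful (Var n).
Proof. intro s; simpl; tauto. Qed.

Lemma truthful_neg a : truthful a -> truthful (Neg a).
Proof.
  intros IHa s; simpl; destruct (IHa s) as [Ha Hna]; split; [exact Hna|].
  rewrite Ha; symmetry; apply (sat_axiom_iff (hd_sat s)), A9.
Qed.

Lemma truthful_and a b : truthful a -> truthful b -> truthful (And a b).
Proof.
  intros IHa IHb s; pose proof (hd_sat s) as HX; simpl.
  destruct (IHa s) as [Ha Hna], (IHb s) as [Hb Hnb].
  rewrite Ha, Hna, Hb, Hnb, (sat_and HX), (sat_axiom_iff HX _ _ (A10 a b)), (sat_or HX).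
  tauto.
Qed.

Lemma truthful_or a b : truthful a -> truthful b -> truthful (Or a b).
Proof.
  intros IHa IHb s; pose proof (hd_sat s) as HX; simpl.
  destruct (IHa s) as [Ha Hna], (IHb s) as [Hb Hnb].
  rewrite Ha, Hna, Hb, Hnb, (sat_or HX), (sat_axiom_iff HX _ _ (A11 a b)), (sat_and HX).
  tauto.
Qed.

Lemma truthful_imp a b : truthful a -> truthful b -> truthful (Imp a b).
Proof.
  intros IHa IHb s; pose proof (hd_sat s) as HX; simpl; split.
  - split.
    + intro H; apply NNPP; intro Hn.
      destruct (imp_counter_witness HX a b Hn) as [D [HD [HsD [HaD HbD]]]].
      apply HbD, (IHb (head_segment HD)), H; [exact HsD|].
      apply (IHa (head_segment HD)), HaD.
    + intros H w Hw Ha; apply (IHb w).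
      apply (sat_mp (hd_sat w)) with a; [apply Hw, H | apply (IHa w), Ha].
  - destruct (IHa s) as [Ha _], (IHb s) as [_ Hnb].
    rewrite Ha, Hnb, (sat_axiom_iff HX _ _ (A12 a b)), (sat_and HX); tauto.
Qed.

Lemma truthful_box a : truthful a -> truthful (Box a).
Proof.
  intros IHa s; pose proof (hd_sat s) as HX; simpl; split; split.
  - intro H; apply NNPP; intro Hn.
    destruct (box_counter_witness HX a Hn) as [D [HD [HboxD HaD]]].
    apply HaD, (IHa (head_segment HD)).
    apply (H (box_refuting_segment HX a)); [exact (fun p Hp => Hp)|].
    exact (conj HD (conj HboxD HaD)).
  - intros H w Hw v Hv; apply (IHa v).
    exact (seg_box_pos w a (Hw _ H) _ Hv).
  - intro H; apply NNPP; intro Hn.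
    destruct (H (nbox_refuting_segment HX a Hn) (fun p Hp => Hp)) as [v [[_ Hav] Hv]].
    apply Hav, (IHa v), Hv.
  - intros H w Hw; destruct (seg_box_neg w a (Hw _ H)) as [D [HD HaD]].
    exists (head_segment (PhiBoxN_sat w D HD)); split; [exact HD|].
    apply (IHa (head_segment (PhiBoxN_sat w D HD))), HaD.
Qed.

Lemma truthful_dia a : truthful a -> truthful (Dia a).
Proof.
  intros IHa s; pose proof (hd_sat s) as HX; simpl; split; split.
  - intro H; apply NNPP; intro Hn.
    destruct (H (dia_refuting_segment HX a Hn) (fun p Hp => Hp)) as [v [[_ Hav] Hv]].
    apply Hav, (IHa v), Hv.
  - intros H w Hw; destruct (seg_dia_pos w a (Hw _ H)) as [D [HD HaD]].
    exists (head_segment (PhiDiaP_sat w D HD)); split; [exact HD|].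
    apply (IHa (head_segment (PhiDiaP_sat w D HD))), HaD.
  - intro H; apply NNPP; intro Hn.
    destruct (ndia_counter_witness HX a Hn) as [D [HD [HdiaD HaD]]].
    apply HaD, (IHa (head_segment HD)).
    apply (H (ndia_refuting_segment HX a)); [exact (fun p Hp => Hp)|].
    exact (conj HD (conj HdiaD HaD)).
  - intros H w Hw v Hv; apply (IHa v).
    exact (seg_dia_neg w a (Hw _ H) _ Hv).
Qed.

Theorem lemma2 : forall (phi : form) (s : segment),
  (supp canonical s true phi <-> hd s phi) /\
  (supp canonical s false phi <-> hd s (Neg phi)).
Proof.
  induction phi.
  - apply truthful_var.
  - apply truthful_neg; assumption.
  - apply truthful_and; assumption.
  - apply truthful_or; assumption.
  - apply truthful_imp; assumption.
  - apply truthful_box; assumption.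
  - apply truthful_dia; assumption.
Qed.
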